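(* In $\mathrm{HMF}(\mathbb{C}^2,\Gamma_W,W)$ the object $K_f$ is exceptional, i.e.\ $\mathrm{Hom}^\bullet(K_f,K_f)$ consists only of scalar multiples of the identity, in degree $0$.
   Context: Let $p,q\ge2$ be integers and $W=x^py+xy^q$. Let $L$ be the abelian group generated by $\vec x,\vec y,\vec c$ modulo $p\vec x+\vec y=\vec x+q\vec y=\vec c$; $S=\mathbb{C}[x,y]$ is $L$-graded with $\deg x=\vec x$, $\deg y=\vec y$, and $R=S/(W)$. $\mathrm{HMF}(\mathbb{C}^2,\Gamma_W,W)$ is the homotopy category of $L$-graded matrix factorisations of $W$, equivalent to $D^b(\mathrm{gr}R)/\mathrm{Perf}(\mathrm{gr}R)$, in which a finitely generated $L$-graded $R$-module is identified with its stabilisation; $\mathrm{Hom}^n(X,Y)=\mathrm{Hom}(X,Y[n])$. Let $f=x^{p-1}+y^{q-1}$ and $K_f=R/(f)$. *)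

From HB Require Import structures.
From mathcomp Require Import all_boot all_order all_algebra.
From mathcomp Require Import Rstruct complex.
Set Implicit Arguments. Unset Strict Implicit. Unset Printing Implicit Defensive.
Import GRing.Theory.
Local Open Scope ring_scope.

Definition CC : fieldType := (Rdefinitions.R)[i].

(* S = C[x,y], realised as {poly {poly C}}: outer variable y, inner variable x. *)
Definition Spoly := {poly {poly CC}}.
Definition xS : Spoly := ('X)%:P.
Definition yS : Spoly := 'X.
Definition coefS (P : Spoly) (a b : nat) : CC := (P`_b)`_a.

(* The grading group L = <x,y,c | p x + y = x + q y = c>.  Eliminating c, an
   element a x + b y is represented by (a,b) : int * int, and
   L = Z^2 / Z (p-1, -(q-1)).  Lequiv decides equality in L. *)
Definition Ldeg := (int * int)%type.
Definition Ladd (u v : Ldeg) : Ldeg := (u.1 + v.1, u.2 + v.2).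
Definition Lopp (u : Ldeg) : Ldeg := (- u.1, - u.2).
Definition Lsub (u v : Ldeg) : Ldeg := Ladd u (Lopp v).
Definition Lequiv (p q : nat) (u v : Ldeg) : Prop :=
  exists k : int, u.1 - v.1 = k * (p%:Z - 1) /\ u.2 - v.2 = - (k * (q%:Z - 1)).
Definition vx : Ldeg := (1, 0).
Definition vy : Ldeg := (0, 1).
Definition vc (p : nat) : Ldeg := (p%:Z, 1).

(* P is homogeneous of degree l in L (the zero polynomial is homogeneous of
   every degree); deg (x^a y^b) = a x + b y. *)
Definition homog (p q : nat) (l : Ldeg) (P : Spoly) : Prop :=
  forall a b : nat, coefS P a b != 0 -> Lequiv p q (a%:Z, b%:Z) l.

Definition W (p q : nat) : Spoly := xS ^+ p * yS + xS * yS ^+ q.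

(* A graded free S-module of rank r is given by the L-degrees of its basis
   elements.  A matrix M : 'M_(m, n) represents the map sending the j-th basis
   vector of the source to sum_i M i j e'_i; it is homogeneous of degree l iff
   each entry M i j is homogeneous of degree (dsrc j - dtgt i + l). *)
Definition homog_mx (p q : nat) m n (dtgt : 'I_m -> Ldeg) (dsrc : 'I_n -> Ldeg)
  (l : Ldeg) (M : 'M[Spoly]_(m, n)) : Prop :=
  forall i j, homog p q (Ladd (Lsub (dsrc j) (dtgt i)) l) (M i j).

#[local] Unset Implicit Arguments.
(* Matrix-factorisation data  X0 --mA--> X1 --mB--> X0(c). *)
Record MFdata := MkMF {
  r0 : nat; r1 : nat;
  d0 : 'I_r0 -> Ldeg;
  d1 : 'I_r1 -> Ldeg;
  mA : 'M[Spoly]_(r1, r0);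
  mB : 'M[Spoly]_(r0, r1)   (* X1 -> X0(c), i.e. X1 -> X0 of degree c *)
}.
#[local] Set Implicit Arguments.

Definition is_MF (p q : nat) (X : MFdata) : Prop :=
  [/\ homog_mx p q (d1 X) (d0 X) (0, 0) (mA X),
      homog_mx p q (d0 X) (d1 X) (vc p) (mB X),
      mB X *m mA X = (W p q)%:M &
      mA X *m mB X = (W p q)%:M].

(* Shift [1]:  X[1] = (X1 --(-mB)--> X0(c) --(-mA)--> X1(c)).  The basis of
   M(c) has degrees shifted by -c (M(c)_l = M_(l+c)). *)
Definition shift1 (p : nat) (X : MFdata) : MFdata :=
  @MkMF (r1 X) (r0 X) (d1 X) (fun i => Lsub (d0 X i) (vc p)) (- mB X) (- mA X).
Definition shiftm1 (p : nat) (X : MFdata) : MFdata :=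
  @MkMF (r1 X) (r0 X) (fun i => Ladd (d1 X i) (vc p)) (d0 X) (- mB X) (- mA X).
Definition shift (p : nat) (n : int) (X : MFdata) : MFdata :=
  match n with
  | Posz k => iter k (shift1 p) X
  | Negz k => iter k.+1 (shiftm1 p) X
  end.

Definition is_MFmor (p q : nat) (X Y : MFdata)
  (f0 : 'M[Spoly]_(r0 Y, r0 X)) (f1 : 'M[Spoly]_(r1 Y, r1 X)) : Prop :=
  [/\ homog_mx p q (d0 Y) (d0 X) (0, 0) f0,
      homog_mx p q (d1 Y) (d1 X) (0, 0) f1,
      f1 *m mA X = mA Y *m f0 &
      f0 *m mB X = mB Y *m f1].

Definition null_homotopic (p q : nat) (X Y : MFdata)
  (f0 : 'M[Spoly]_(r0 Y, r0 X)) (f1 : 'M[Spoly]_(r1 Y, r1 X)) : Prop :=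
  exists (h : 'M[Spoly]_(r1 Y, r0 X)) (k : 'M[Spoly]_(r0 Y, r1 X)),
    [/\ homog_mx p q (d1 Y) (d0 X) (Lopp (vc p)) h,
        homog_mx p q (d0 Y) (d1 X) (0, 0) k,
        f0 = k *m mA X + mB Y *m h &
        f1 = mA Y *m k + h *m mB X].

(* Since W = (xy) f, the stabilisation
   of K_f is the rank-one matrix factorisation X0 --xy--> X1 --f--> X0(c),
   with X0 = S(-c) (generator in degree c) and X1 generated in degree c - x - y,
   whose cokernel coker(X1 --f--> X0(c)) = S/(f) = K_f. *)
Definition fS (p q : nat) : Spoly := xS ^+ (p.-1) + yS ^+ (q.-1).
Definition Kf (p q : nat) : MFdata :=
  @MkMF 1 1 (fun _ => vc p) (fun _ => Lsub (vc p) (Ladd vx vy))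
        (xS * yS)%:M (fS p q)%:M.
Arguments is_MFmor p q X Y f0 f1 : clear implicits.
Arguments null_homotopic p q X Y f0 f1 : clear implicits.

From mathcomp Require Import all_boot all_order all_algebra.
From mathcomp Require Import Rstruct complex.
From mathcomp Require Import zify ring.
Import GRing.Theory.
Local Open Scope ring_scope.

(* K_f is the rank-one factorisation S --xy--> S --f--> S(c), and its shifts
   alternate between two rank-one shapes, so a morphism out of K_f is a pair
   of polynomials (g0, g1) and a homotopy is a pair of polynomial cofactors.
   For K_f -> K_f[2j] one has g1 = g0, homogeneous of degree j c; if j != 0,
   every monomial of that degree is divisible by xy, by x^p or by y^q, hence
   lies in the ideal (xy, f) with homogeneous cofactors, and these cofactors
   are a null-homotopy.  For K_f -> K_f[2j+1] the morphism condition says that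
   xy divides f g0; as f(x,0) and f(0,y) are nonzero, xy divides g0, and the
   quotient is a null-homotopy.  In degree 0 the homogeneous polynomials are
   the constants, and the identity is not null-homotopic because xy and f both
   vanish at the origin. *)

Definition monomial (a b : nat) : Spoly := xS ^+ a * yS ^+ b.

Lemma coefS_ext (P Q : Spoly) :
  (forall a b, coefS P a b = coefS Q a b) -> P = Q.
Proof. by move=> eqPQ; apply/polyP=> b; apply/polyP=> a; apply: eqPQ. Qed.

Lemma coefS0 a b : coefS 0 a b = 0.
Proof. by rewrite /coefS !coef0. Qed.

Lemma coefSD (P Q : Spoly) a b : coefS (P + Q) a b = coefS P a b + coefS Q a b.
Proof. by rewrite /coefS !coefD. Qed.

Lemma coefSN (P : Spoly) a b : coefS (- P) a b = - coefS P a b.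
Proof. by rewrite /coefS !coefN. Qed.

Lemma coefSCM (c : CC) (P : Spoly) a b : coefS (c%:P%:P * P) a b = c * coefS P a b.
Proof. by rewrite /coefS !coefCM. Qed.

Lemma coefS_monomialM i j (P : Spoly) a b :
  coefS (monomial i j * P) a b =
  if (i <= a)%N && (j <= b)%N then coefS P (a - i) (b - j) else 0.
Proof.
rewrite /coefS /monomial /xS /yS -rmorphXn -mulrA mulrCA coefXnM.
case: (ltnP b j) => [_|_]; first by rewrite andbF coef0.
by rewrite andbT coefCM coefXnM; case: (ltnP a i).
Qed.

Lemma coefS_monomial a b a' b' :
  coefS (monomial a b) a' b' = ((a' == a) && (b' == b))%:R.
Proof.
rewrite -[monomial a b]mulr1 coefS_monomialM /coefS coef1.
case: ifP => [/andP[ha hb]|]; last first.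
  by case: eqP => [->|] //; case: eqP => [->|] //; rewrite !leqnn.
rewrite !subn_eq0 !eqn_leq ha hb !andbT.
case: (b' <= b)%N; last by rewrite andbF coef0.
by rewrite coef1 subn_eq0 andbT.
Qed.

Lemma xyS_monomial : xS * yS = monomial 1 1.
Proof. by rewrite /monomial !expr1. Qed.

Lemma fS_monomial p q : fS p q = monomial p.-1 0 + monomial 0 q.-1.
Proof. by rewrite /fS /monomial !expr0 mulr1 mul1r. Qed.

Lemma W_fS_xyS p q : (0 < p)%N -> (0 < q)%N -> W p q = fS p q * (xS * yS).
Proof.
case: p q => [|p] [|q] // _ _.
by rewrite /W /fS /= !exprS; ring.
Qed.

Lemma xyS_neq0 : xS * yS != 0.
Proof. by rewrite mulf_neq0 // ?polyC_eq0 polyX_eq0. Qed.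

Lemma coefS00M (P Q : Spoly) : coefS (P * Q) 0 0 = coefS P 0 0 * coefS Q 0 0.
Proof. by rewrite /coefS !coef0M. Qed.

Lemma monomial_expansion (g : Spoly) :
  g = \sum_(b < size g) \sum_(a < size g`_b) (coefS g a b)%:P%:P * monomial a b.
Proof.
rewrite -{1}[g]coefK poly_def; apply: eq_bigr => b _.
rewrite -mul_polyC -{1}[g`_b]coefK poly_def rmorph_sum mulr_suml.
apply: eq_bigr => a _.
by rewrite /monomial /coefS /xS /yS -mul_polyC rmorphM rmorphXn mulrA.
Qed.

Section Homogeneous.
Variables p q : nat.

Lemma homog0 l : homog p q l 0.
Proof. by move=> a b; rewrite coefS0 eqxx. Qed.

Lemma homogD l P Q : homog p q l P -> homog p q l Q -> homog p q l (P + Q).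
Proof.
move=> hP hQ a b; rewrite coefSD.
by have [->|/hP //] := eqVneq (coefS P a b) 0; rewrite add0r; apply: hQ.
Qed.

Lemma homogN l P : homog p q l P -> homog p q l (- P).
Proof. by move=> hP a b; rewrite coefSN oppr_eq0; apply: hP. Qed.

Lemma homogCM l c P : homog p q l P -> homog p q l (c%:P%:P * P).
Proof. by move=> hP a b; rewrite coefSCM mulf_eq0 negb_or => /andP[_ /hP]. Qed.

Lemma homog_monomial l a b : Lequiv p q (a%:Z, b%:Z) l -> homog p q l (monomial a b).
Proof.
move=> hab a' b'; rewrite coefS_monomial.
by case: (a' =P a) => [->|]; case: (b' =P b) => [->|] //; rewrite eqxx.
Qed.

Lemma homog_congr l l' P : l.1 = l'.1 -> l.2 = l'.2 -> homog p q l P -> homog p q l' P.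
Proof. by case: l l' => [l1 l2] [l1' l2'] /= -> ->. Qed.

End Homogeneous.

Definition MF11 (e0 e1 : Ldeg) (a b : Spoly) : MFdata :=
  @MkMF 1 1 (fun=> e0) (fun=> e1) a%:M b%:M.

Lemma MF11_congr e0 e1 e0' e1' a b :
  e0.1 = e0'.1 -> e0.2 = e0'.2 -> e1.1 = e1'.1 -> e1.2 = e1'.2 ->
  MF11 e0 e1 a b = MF11 e0' e1' a b.
Proof. by case: e0 e0' e1 e1' => [? ?] [? ?] [? ?] [? ?] /= -> -> -> ->. Qed.

Lemma scalar_mx_inj (R : nzRingType) n : injective (@scalar_mx R n.+1).
Proof. by move=> a b /(congr1 (fun M : 'M_n.+1 => M 0 0)); rewrite !mxE. Qed.

Lemma homog_mx_scalar p q e e' l (a : Spoly) :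
  homog p q (Ladd (Lsub e' e) l) a ->
  homog_mx p q (fun _ : 'I_1 => e) (fun _ : 'I_1 => e') l a%:M.
Proof. by move=> ha i j; rewrite !ord1 mxE eqxx mulr1n. Qed.

Section RankOne.
Variables p q : nat.

Lemma shift1_MF11 e0 e1 a b :
  shift1 p (MF11 e0 e1 a b) = MF11 e1 (Lsub e0 (vc p)) (- b) (- a).
Proof. by rewrite /shift1 /MF11 /= !raddfN. Qed.

Lemma shiftm1_MF11 e0 e1 a b :
  shiftm1 p (MF11 e0 e1 a b) = MF11 (Ladd e1 (vc p)) e0 (- b) (- a).
Proof. by rewrite /shiftm1 /MF11 /= !raddfN. Qed.

Lemma is_MF_MF11 e0 e1 a b :
  homog p q (Lsub e0 e1) a -> homog p q (Ladd (Lsub e1 e0) (vc p)) b ->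
  b * a = W p q -> a * b = W p q -> is_MF p q (MF11 e0 e1 a b).
Proof.
move=> ha hb ba ab; split; rewrite /= -?scalar_mxM ?ba ?ab //.
  by apply: homog_mx_scalar; apply: homog_congr ha => /=; lia.
by apply: homog_mx_scalar.
Qed.

Lemma is_MFmor_MF11 e0 e1 a b e0' e1' a' b' f0 f1 :
  is_MFmor p q (MF11 e0 e1 a b) (MF11 e0' e1' a' b') f0 f1 ->
  exists g0 g1, [/\ f0 = g0%:M, f1 = g1%:M,
    homog p q (Lsub e0 e0') g0 & g1 * a = a' * g0].
Proof.
move=> [hf0 _ f1a _]; exists (f0 0 0), (f1 0 0).
split; try exact: mx11_scalar.
  by have := hf0 0 0; apply: homog_congr => /=; lia.
by move/(congr1 (fun M : 'M_1 => M 0 0)): f1a; rewrite /= mul_mx_scalar mul_scalar_mx !mxE mulrC.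
Qed.

Lemma null_homotopic_MF11 e0 e1 a b e0' e1' a' b' g0 g1 h k :
  homog p q (Lsub (Lsub e0 e1') (vc p)) h -> homog p q (Lsub e1 e0') k ->
  g0 = k * a + b' * h -> g1 = a' * k + h * b ->
  null_homotopic p q (MF11 e0 e1 a b) (MF11 e0' e1' a' b') g0%:M g1%:M.
Proof.
move=> hh hk -> ->; exists h%:M, k%:M; rewrite -!scalar_mxM -!raddfD.
split => //; apply: homog_mx_scalar.
  by apply: homog_congr hh => /=; lia.
by apply: homog_congr hk => /=; lia.
Qed.

End RankOne.

Section Shifts.
Variables p q : nat.

(* [Kf_even j] is K_f[2j] and [Kf_odd j] is K_f[2j+1]. *)
Definition Kf_even (j : int) : MFdata :=
  MF11 (p%:Z - j * p%:Z, 1 - j) (p%:Z - 1 - j * p%:Z, - j) (xS * yS) (fS p q).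
Definition Kf_odd (j : int) : MFdata :=
  MF11 (p%:Z - 1 - j * p%:Z, - j) (- j * p%:Z, - j) (- fS p q) (- (xS * yS)).

Lemma Kf_even0 : Kf p q = Kf_even 0.
Proof. by apply: MF11_congr => /=; lia. Qed.

Lemma shift1_Kf_even j : shift1 p (Kf_even j) = Kf_odd j.
Proof. by rewrite shift1_MF11; apply: MF11_congr => /=; lia. Qed.

Lemma shift1_Kf_odd j : shift1 p (Kf_odd j) = Kf_even (j + 1).
Proof. by rewrite shift1_MF11 !opprK; apply: MF11_congr => /=; lia. Qed.

Lemma shiftm1_Kf_even j : shiftm1 p (Kf_even j) = Kf_odd (j - 1).
Proof. by rewrite shiftm1_MF11; apply: MF11_congr => /=; lia. Qed.

Lemma shiftm1_Kf_odd j : shiftm1 p (Kf_odd j) = Kf_even j.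
Proof. by rewrite shiftm1_MF11 !opprK; apply: MF11_congr => /=; lia. Qed.

Lemma iter_shift1_Kf k :
  iter k (shift1 p) (Kf p q) =
  if odd k then Kf_odd k./2%:Z else Kf_even k./2%:Z.
Proof.
elim: k => [|k IHk]; first exact: Kf_even0.
rewrite iterS IHk /= uphalf_half; case: (odd k).
  by rewrite shift1_Kf_odd; congr Kf_even; lia.
by rewrite shift1_Kf_even.
Qed.

Lemma iter_shiftm1_Kf k :
  iter k (shiftm1 p) (Kf p q) =
  if odd k then Kf_odd (- k./2%:Z - 1) else Kf_even (- k./2%:Z).
Proof.
elim: k => [|k IHk]; first exact: Kf_even0.
rewrite iterS IHk /= uphalf_half; case: (odd k).
  by rewrite shiftm1_Kf_odd; congr Kf_even; lia.
by rewrite shiftm1_Kf_even.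
Qed.

Lemma shift_Kf n :
  (exists j, n = j * 2 /\ shift p n (Kf p q) = Kf_even j) \/
  (exists j, n = j * 2 + 1 /\ shift p n (Kf p q) = Kf_odd j).
Proof.
have hk := odd_double_half; case: n => k; rewrite /shift.
  rewrite iter_shift1_Kf; move: (hk k); case: (odd k) => /= hk'.
    by right; exists k./2%:Z; split => //; lia.
  by left; exists k./2%:Z; split => //; lia.
rewrite iter_shiftm1_Kf NegzE; move: (hk k.+1); case: (odd k.+1) => /= hk'.
  by right; exists (- k.+1./2%:Z - 1); split => //; lia.
by left; exists (- k.+1./2%:Z); split => //; lia.
Qed.

End Shifts.

Lemma coef0_eq0_of_mul (R : idomainType) (A P : {poly R}) :
  A`_0 != 0 -> (A * P)`_0 = 0 -> P`_0 = 0.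
Proof. by move=> A0 /eqP; rewrite coef0M mulf_eq0 (negPf A0) => /eqP. Qed.

Section Kf.
Variables p q : nat.
Hypotheses (hp : (2 <= p)%N) (hq : (2 <= q)%N).

Definition ideal_xy_f (l : Ldeg) (g : Spoly) : Prop :=
  exists h k, [/\ homog p q (Lsub l (p%:Z - 1, 0)) h, homog p q (Lsub l (1, 1)) k &
                  g = k * (xS * yS) + fS p q * h].

Lemma ideal_xy_f0 l : ideal_xy_f l 0.
Proof. by exists 0, 0; rewrite mul0r mulr0 addr0; split => //; apply: homog0. Qed.

Lemma ideal_xy_fD l g g' : ideal_xy_f l g -> ideal_xy_f l g' -> ideal_xy_f l (g + g').
Proof.
move=> [h [k [hh hk ->]]] [h' [k' [hh' hk' ->]]].
by exists (h + h'), (k + k'); split; [exact: homogD | exact: homogD | ring].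
Qed.

Lemma ideal_xy_fCM l c g : ideal_xy_f l g -> ideal_xy_f l (c%:P%:P * g).
Proof.
move=> [h [k [hh hk ->]]].
by exists (c%:P%:P * h), (c%:P%:P * k); split; [exact: homogCM | exact: homogCM | ring].
Qed.

Lemma monomial_ideal_xy l a b :
  Lequiv p q (a.+1%:Z, b.+1%:Z) l -> ideal_xy_f l (monomial a.+1 b.+1).
Proof.
move=> [k /= [hk1 hk2]]; exists 0, (monomial a b); split; first exact: homog0.
  by apply: homog_monomial; exists k => /=; lia.
by rewrite /monomial !exprS; ring.
Qed.

Lemma monomial_ideal_x l a b :
  Lequiv p q ((a + p)%N%:Z, b%:Z) l -> ideal_xy_f l (monomial (a + p) b).
Proof.
move=> [k /= [hk1 hk2]]; exists (monomial a.+1 b), (- monomial a (b + q.-2)).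
split; first by apply: homog_monomial; exists k => /=; lia.
  by apply: homogN; apply: homog_monomial; exists (k - 1) => /=; lia.
have [p1 ->] : exists p1, p = p1.+1 by exists p.-1; lia.
have [q2 ->] : exists q2, q = q2.+2 by exists q.-2; lia.
by rewrite /monomial /fS /= addnS !exprS !exprD; ring.
Qed.

Lemma monomial_ideal_y l a b :
  Lequiv p q (a%:Z, (b + q)%N%:Z) l -> ideal_xy_f l (monomial a (b + q)).
Proof.
move=> [k /= [hk1 hk2]]; exists (monomial a b.+1), (- monomial (a + p.-2) b).
split; first by apply: homog_monomial; exists (k + 1) => /=; lia.
  by apply: homogN; apply: homog_monomial; exists (k + 1) => /=; lia.
have [p2 ->] : exists p2, p = p2.+2 by exists p.-2; lia.
have [q1 ->] : exists q1, q = q1.+1 by exists q.-1; lia.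
by rewrite /monomial /fS /= addnS !exprS !exprD; ring.
Qed.

Lemma Lequiv_mulc_exponents {a b} {j : int} : j != 0 ->
  Lequiv p q (a%:Z, b%:Z) (j * p%:Z, j) -> (b = 0 -> p <= a)%N /\ (a = 0 -> q <= b)%N.
Proof.
move=> /eqP j_neq0 [k /= [hk1 hk2]]; split=> [b0|a0]; subst.
  have hj : j = k * (q%:Z - 1) by lia.
  have k_neq0 : k != 0 by apply/eqP => k0; apply: j_neq0; rewrite hj k0 mul0r.
  have k_gt0 : 0 < k by nia.
  nia.
have k_lt0 : k < 0 by nia.
have j_gt0 : 0 < j by nia.
nia.
Qed.

Lemma homog_mulc_ideal_xy_f (j : int) g : j != 0 ->
  homog p q (j * p%:Z, j) g -> ideal_xy_f (j * p%:Z, j) g.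
Proof.
move=> j_neq0 hg; rewrite (monomial_expansion g).
apply: (big_ind (ideal_xy_f _)); [exact: ideal_xy_f0 | exact: ideal_xy_fD |] => b _.
apply: (big_ind (ideal_xy_f _)); [exact: ideal_xy_f0 | exact: ideal_xy_fD |] => a _.
have [->|/hg hab] := eqVneq (coefS g a b) 0.
  by rewrite mul0r; apply: ideal_xy_f0.
apply: ideal_xy_fCM; move: {a}(a : nat) hab => a; move: {b}(b : nat) => b hab.
have [b0_le a0_le] := Lequiv_mulc_exponents j_neq0 hab.
case: a b hab b0_le a0_le => [|a] [|b] hab b0_le a0_le.
- by have := a0_le erefl; rewrite leqNgt (leq_trans _ hq).
- rewrite -(subnK (a0_le erefl)); apply: monomial_ideal_y.
  by rewrite subnK // a0_le.
- rewrite -(subnK (b0_le erefl)); apply: monomial_ideal_x.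
  by rewrite subnK // b0_le.
- exact: monomial_ideal_xy.
Qed.

Lemma homog0_constant g : homog p q (0, 0) g -> g = (coefS g 0 0)%:P%:P.
Proof.
move=> hg; apply: coefS_ext => a b; rewrite /coefS coefC.
have [-> | b_neq0] := eqVneq b 0%N; last first.
  rewrite coef0; apply/eqP; apply: contraT => /hg [k /= [hk1 hk2]].
  by move: b_neq0; rewrite -lt0n; nia.
rewrite coefC; have [-> // | a_neq0] := eqVneq a 0%N.
apply/eqP; apply: contraT => /hg [k /= [hk1 hk2]].
by move: a_neq0; rewrite -lt0n; nia.
Qed.

Lemma xy_dvd_of_fS_mul g0 g1 :
  fS p q * g0 = xS * yS * g1 -> exists u, g0 = xS * yS * u.
Proof.
move=> fg0.
have q1_neq0 : q.-1 != 0%N by rewrite -lt0n; lia.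
have p1_neq0 : p.-1 != 0%N by rewrite -lt0n; lia.
have g0_y0 : g0`_0 = 0.
  apply: (@coef0_eq0_of_mul _ (fS p q)).
    rewrite /fS /xS /yS coefD -rmorphXn coefC coefXn eqxx (eq_sym 0%N) (negPf q1_neq0).
    by rewrite addr0 expf_neq0 // polyX_eq0.
  by rewrite fg0 -mulrA coef0M /yS coefXM mulr0.
have g0_x0 b : (g0`_b)`_0 = 0.
  (* [map_poly (horner_eval 0)] substitutes x := 0. *)
  have ev0_fg0 : 'X^(q.-1) * map_poly (horner_eval 0) g0 = 0.
    have := congr1 (map_poly (horner_eval 0)) fg0; rewrite !rmorphM /fS rmorphD !rmorphXn.
    rewrite /= /xS /yS map_polyX map_polyC /= horner_evalE hornerX expr0n.
    by rewrite (negPf p1_neq0) add0r !mul0r => ->.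
  move/eqP: ev0_fg0; rewrite mulf_eq0 expf_eq0 polyX_eq0 andbF /= => /eqP.
  by move/(congr1 (coefp b)); rewrite /= coef_map /= horner_evalE horner_coef0 coef0.
exists (map_poly (drop_poly 1) (drop_poly 1 g0)); apply: coefS_ext => a b.
rewrite xyS_monomial coefS_monomialM.
case: a => [|a]; first by rewrite /coefS g0_x0.
case: b => [|b]; first by rewrite /coefS g0_y0 coef0.
by rewrite /coefS /= !subn1 /= coef_map /= !coef_drop_poly !addn1.
Qed.

Lemma homog_xyMl l u :
  homog p q (Ladd l (1, 1)) (xS * yS * u) -> homog p q l u.
Proof.
move=> hu a b u_ab; have := hu a.+1 b.+1.
rewrite xyS_monomial coefS_monomialM.
by rewrite /= !subn1 => /(_ u_ab) [k /= [hk1 hk2]]; exists k => /=; lia.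
Qed.

Lemma Kf_is_MF : is_MF p q (Kf p q).
Proof.
apply: is_MF_MF11.
- by rewrite xyS_monomial; apply: homog_monomial; exists 0 => /=; lia.
- rewrite fS_monomial; apply: homogD; apply: homog_monomial.
    by exists 0 => /=; lia.
  by exists (-1) => /=; lia.
- by rewrite W_fS_xyS ?(ltnW hp) ?(ltnW hq).
- by rewrite W_fS_xyS ?(ltnW hp) ?(ltnW hq) // mulrC.
Qed.

Lemma Kf_even_mor_null_homotopic j f0 f1 : j != 0 ->
  is_MFmor p q (Kf p q) (Kf_even p q j) f0 f1 ->
  null_homotopic p q (Kf p q) (Kf_even p q j) f0 f1.
Proof.
move=> j_neq0 /is_MFmor_MF11 [g0 [g1 [-> -> hg0 g1xy]]].
have g10 : g1 = g0 by apply: (mulIf xyS_neq0); rewrite g1xy mulrC.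
have [|h [k [hh hk g0E]]] := @homog_mulc_ideal_xy_f j g0 j_neq0.
  by apply: homog_congr hg0 => /=; lia.
apply: (@null_homotopic_MF11 p q _ _ _ _ _ _ _ _ _ _ h k).
- by apply: homog_congr hh => /=; lia.
- by apply: homog_congr hk => /=; lia.
- exact: g0E.
- by rewrite g10 g0E; ring.
Qed.

Lemma Kf_odd_mor_null_homotopic j f0 f1 :
  is_MFmor p q (Kf p q) (Kf_odd p q j) f0 f1 ->
  null_homotopic p q (Kf p q) (Kf_odd p q j) f0 f1.
Proof.
move=> /is_MFmor_MF11 [g0 [g1 [-> -> hg0 g1xy]]].
have [|u g0E] := @xy_dvd_of_fS_mul g0 (- g1).
  by rewrite mulrN [_ * g1]mulrC g1xy mulNr opprK.
have g1E : g1 = - fS p q * u.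
  by apply: (mulIf xyS_neq0); rewrite g1xy g0E; ring.
apply: (@null_homotopic_MF11 p q _ _ _ _ _ _ _ _ _ _ 0 u).
- exact: homog0.
- apply: (@homog_congr p q (j * p%:Z, j)) => /=; try lia.
  by apply: homog_xyMl; rewrite -g0E; apply: homog_congr hg0 => /=; lia.
- by rewrite g0E; ring.
- by rewrite g1E; ring.
Qed.

Lemma Kf_endo_scalar f0 f1 : is_MFmor p q (Kf p q) (Kf p q) f0 f1 ->
  exists lam : CC, null_homotopic p q (Kf p q) (Kf p q)
                     (f0 - (lam%:P%:P)%:M) (f1 - (lam%:P%:P)%:M).
Proof.
move=> /is_MFmor_MF11 [g0 [g1 [-> -> hg0 g1xy]]].
have g10 : g1 = g0 by apply: (mulIf xyS_neq0); rewrite g1xy mulrC.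
have g0E : g0 = (coefS g0 0 0)%:P%:P.
  by apply: homog0_constant; apply: homog_congr hg0 => /=; lia.
exists (coefS g0 0 0); set c := coefS g0 0 0 in g0E *.
rewrite -!raddfB g10 g0E subrr.
by apply: (@null_homotopic_MF11 p q _ _ _ _ _ _ _ _ _ _ 0 0);
  rewrite ?mulr0 ?mul0r ?addr0 //; apply: homog0.
Qed.

Lemma Kf_id_not_null_homotopic : ~ null_homotopic p q (Kf p q) (Kf p q) 1%:M 1%:M.
Proof.
move=> [h [k [_ _ idE _]]].
move: idE; rewrite /= [h]mx11_scalar [k]mx11_scalar -!scalar_mxM -raddfD.
move=> /scalar_mx_inj /(congr1 (fun P => coefS P 0 0)).
rewrite coefSD mulrC xyS_monomial coefS_monomialM /= add0r.
rewrite coefS00M fS_monomial coefSD !coefS_monomial.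
have -> : (0 == p.-1)%N = false by lia.
have -> : (0 == q.-1)%N = false by lia.
by rewrite /= addr0 mul0r /coefS coef1 coefC; apply/eqP; rewrite oner_eq0.
Qed.

End Kf.

Theorem lemma2p6 (p q : nat) (hp : (2 <= p)%N) (hq : (2 <= q)%N) :
  [/\ is_MF p q (Kf p q),
      (forall (n : int) f0 f1,
          n != 0 -> is_MFmor p q (Kf p q) (shift p n (Kf p q)) f0 f1 ->
          null_homotopic p q (Kf p q) (shift p n (Kf p q)) f0 f1),
      (forall f0 f1, is_MFmor p q (Kf p q) (Kf p q) f0 f1 ->
          exists lam : CC,
            null_homotopic p q (Kf p q) (Kf p q)
              (f0 - (lam%:P%:P)%:M) (f1 - (lam%:P%:P)%:M)) &
      ~ null_homotopic p q (Kf p q) (Kf p q) 1%:M 1%:M].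
Proof.
split; [exact: Kf_is_MF | | exact: Kf_endo_scalar | exact: Kf_id_not_null_homotopic].
move=> n; have [[j [nE ->]] | [j [_ ->]]] := shift_Kf p q n => f0 f1 n_neq0.
  apply: Kf_even_mor_null_homotopic => //.
  by apply: contraNneq n_neq0 => j0; rewrite nE j0 mul0r.
exact: Kf_odd_mor_null_homotopic.
Qed.
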